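(* Let $a,b,k$ be positive integers. If the player cannot win the $(a,b)$-game, then the player cannot win the $(ak,b)$-game.
   Context: The $(n,m)$-game: $n$ counters at positions $1,\dots,n$ (vertices in cyclic order of a regular $n$-gon table), each showing an element of $\mathbb{Z}_m$; a configuration is a vector in $\mathbb{Z}_m^n$, initially arbitrary and unknown. Each turn the player chooses a move $y\in\mathbb{Z}_m^n$ added coordinatewise, then the table is rotated by an adversarially chosen $k\in\mathbb{Z}_n$, replacing $x$ by $x'$ with $x'_{i+k}=x_i$ (indices mod $n$). The player wins if at some moment (including initially) all counters show $0$. A strategy is a finite sequence of moves; it is winning if it forces the zero configuration at some time for every initial configuration and every choice of rotations. ''The player can win'' means a winning finite sequence exists. *)

From mathcomp Require Import all_boot.
Set Implicit Arguments. Unset Strict Implicit. Unset Printing Implicit Defensive.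

(* Positions are 'I_n (position i+1 of the paper is i here),
   counter values are 'I_m, read as Z_m (arithmetic modulo m).
   We need 0 < n and 0 < m to build ordinals by reduction modulo. *)

Definition modord (p : nat) (Hp : 0 < p) (x : nat) : 'I_p :=
  Ordinal (ltn_pmod x Hp).

Section Game.
Variables (n m : nat) (Hn : 0 < n) (Hm : 0 < m).

Definition config := 'I_n -> 'I_m.

Definition add_move (x y : config) : config :=
  fun i => modord Hm (x i + y i).

(* rotation by k: x'_{i+k} = x_i, i.e. x'_j = x_{j-k} (indices mod n) *)
Definition rotate (k : 'I_n) (x : config) : config :=
  fun j => x (modord Hn (j + (n - k))).

Definition turn (x y : config) (k : 'I_n) : config := rotate k (add_move x y).

Definition is_zero (x : config) : Prop := forall i, val (x i) = 0.

Fixpoint play (x : config) (ys : seq config) (ks : seq 'I_n) : seq config :=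
  match ys, ks with
  | y :: ys', k :: ks' => x :: play (turn x y k) ys' ks'
  | _, _ => [:: x]
  end.

Definition winning (ys : seq config) : Prop :=
  forall (x0 : config) (ks : seq 'I_n), size ks = size ys ->
    exists2 t, t < size (play x0 ys ks) & is_zero (nth x0 (play x0 ys ks) t).

Definition can_win : Prop := exists ys : seq config, winning ys.

End Game.

Lemma mul_pos (a k : nat) : 0 < a -> 0 < k -> 0 < a * k.
Proof. by move=> Ha Hk; rewrite muln_gt0 Ha Hk. Qed.

From mathcomp Require Import all_boot.
Set Implicit Arguments. Unset Strict Implicit. Unset Printing Implicit Defensive.

(* Fold the (n,m)-table onto a d-gon, d | n, by summing the counters of each
   residue class mod d.  The fold is additive, turns a rotation of the big
   table by r < d into the rotation of the small table by r, sends the zero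
   configuration to zero, and every small configuration is the fold of a big
   one.  Hence every play of the folded strategy in the (d,m)-game shadows a
   play of the original strategy in the (n,m)-game, and reaches zero whenever
   the latter does. *)

Section Simulation.
Variables (n m n' m' : nat) (Hn : 0 < n) (Hm : 0 < m) (Hn' : 0 < n') (Hm' : 0 < m').
Variables (proj_move : config n m -> config n' m') (lift_rot : 'I_n' -> 'I_n).
Variable R : config n m -> config n' m' -> Prop.
Hypothesis R_turn : forall X x Y r,
  R X x -> R (turn Hn Hm X Y (lift_rot r)) (turn Hn' Hm' x (proj_move Y) r).
Hypothesis R_zero : forall X x, R X x -> is_zero X -> is_zero x.

Lemma play_simulation Ys ks X x : R X x ->
  (exists2 t, t < size (play Hn Hm X Ys (map lift_rot ks))
            & is_zero (nth X (play Hn Hm X Ys (map lift_rot ks)) t)) ->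
  exists2 t, t < size (play Hn' Hm' x (map proj_move Ys) ks)
           & is_zero (nth x (play Hn' Hm' x (map proj_move Ys) ks) t).
Proof.
elim: Ys ks X x => [|Y Ys IH] [|r ks] X x RXx [[|t] //= lt_t zero_t];
  try by exists 0 => //; exact: R_zero zero_t.
rewrite (set_nth_default (turn Hn Hm X Y (lift_rot r))) // in zero_t.
have [t' lt_t' zero_t'] := IH ks _ _ (R_turn Y r RXx) (ex_intro2 _ _ t lt_t zero_t).
by exists t'.+1 => //=; rewrite (set_nth_default (turn Hn' Hm' x (proj_move Y) r)).
Qed.

Lemma can_win_simulation :
  (forall x, exists X, R X x) -> can_win Hn Hm -> can_win Hn' Hm'.
Proof.
move=> R_onto [Ys win_Ys]; exists (map proj_move Ys) => x0 ks size_ks.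
have [X0 RX0] := R_onto x0.
apply: play_simulation RX0 (win_Ys X0 (map lift_rot ks) _).
by rewrite size_map size_ks size_map.
Qed.

End Simulation.

Section Fold.
Variables (d n m : nat) (Hd : 0 < d) (Hn : 0 < n) (Hm : 0 < m).
Hypothesis dvd_dn : d %| n.

Definition fold_config (X : config n m) : config d m :=
  fun j => modord Hm (\sum_(i < n | i %% d == j) X i).

Definition widen_rot (r : 'I_d) : 'I_n :=
  Ordinal (leq_trans (ltn_ord r) (dvdn_leq Hn dvd_dn)).

Definition spread_config (x : config d m) : config n m :=
  fun i => if val i < d then x (modord Hd i) else modord Hm 0.

Lemma fold_add_move X Y :
  fold_config (add_move Hm X Y) =1 add_move Hm (fold_config X) (fold_config Y).
Proof. by move=> j; apply: val_inj; rewrite /= modn_summ modnDm big_split. Qed.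

Lemma modn_rot_dvd x (r : 'I_d) : (x + (n - r)) %% d = (x + (d - r)) %% d.
Proof.
have le_rd : r <= d := ltnW (ltn_ord r).
apply/eqP; rewrite -(eqn_modDr r) -!addnA !subnK ?(leq_trans le_rd (dvdn_leq Hn dvd_dn)) //.
by rewrite -modnDmr (eqP dvd_dn) addn0 modnDr.
Qed.

Lemma fold_rotate X (r : 'I_d) :
  fold_config (rotate Hn (widen_rot r) X) =1 rotate Hd r (fold_config X).
Proof.
move=> j; apply: val_inj => /=.
pose h (i : 'I_n) := modord Hn (i + (n - r)).
have inj_h : injective h.
  move=> i i' /(congr1 val) /eqP /=; rewrite eqn_modDr !modn_small //.
  by move=> /eqP; apply: val_inj.
rewrite [in RHS](reindex_inj inj_h) /=; congr (_ %% _); apply: eq_bigl => i /=.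
by rewrite (modn_dvdm _ dvd_dn) !modn_rot_dvd eqn_modDr (modn_small (ltn_ord j)).
Qed.

Lemma fold_zero X : is_zero X -> is_zero (fold_config X).
Proof. by move=> zero_X j; rewrite /= big1 ?mod0n // => i _; apply: zero_X. Qed.

Lemma fold_spread x : fold_config (spread_config x) =1 x.
Proof.
move=> j; apply: val_inj => /=.
rewrite (bigD1 (widen_rot j)) /=; last by rewrite modn_small.
rewrite big1 ?addn0.
  rewrite /spread_config /= ltn_ord modn_small //.
  by congr (val (x _)); apply: val_inj; rewrite /= modn_small.
move=> i /andP[mod_i ne_ij]; rewrite /spread_config.
case: ifP => [lt_id | _]; last by rewrite /= mod0n.
by move: ne_ij mod_i; rewrite -(inj_eq val_inj) /= modn_small // => /negbTE ->.
Qed.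

Lemma can_win_fold : can_win Hn Hm -> can_win Hd Hm.
Proof.
apply: (@can_win_simulation _ _ _ _ _ _ _ _ fold_config widen_rot
          (fun X x => fold_config X =1 x)).
- move=> X x Y r fold_X j; rewrite /turn fold_rotate /rotate fold_add_move.
  by rewrite /add_move fold_X.
- by move=> X x fold_X /fold_zero zero_fold j; rewrite -fold_X.
- by move=> x; exists (spread_config x); exact: fold_spread.
Qed.

End Fold.

Theorem lemma3p1 (a b k : nat) (Ha : 0 < a) (Hb : 0 < b) (Hk : 0 < k) :
  ~ can_win Ha Hb -> ~ can_win (mul_pos Ha Hk) Hb.
Proof. by move=> lose_a /(can_win_fold Ha (dvdn_mulr k (dvdnn a))). Qed.
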